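(* Let $p\ge 2$, $d\in\{0,\dots,9\}$ and $n\ge 10^{p-1}$ be integers, and let $k=\max\{i\in\mathbb N:10^{i+p}\le n\}$ (with $k=-1$ if this set is empty). Then $$P_{(d,n,p)}=\frac{1}{n+1-10^{p-1}}\Big(P_{(d,10^{k+p}-1,p)}\times(10^{k+p}-10^{p-1})+r_{(n,d,p)}\Big),$$ where, when $k=-1$, the product $P_{(d,10^{k+p}-1,p)}\times(10^{k+p}-10^{p-1})$ is taken to be $0$, and where, with $l=\big\lfloor\frac{n-(10^{p-1}+d)10^{k+1}}{10^{k+2}}\big\rfloor+10^{p-2}$: if the $p$-th digit of $n$ is $d$, \begin{align*} r_{(n,d,p)}=&\sum_{j=10^{p-2}}^{l}\ \sum_{b=(10j+d)10^{k+1}}^{\min(n,(10j+(d+1))10^{k+1}-1)}\frac{b-((9j+d)10^{k+1}+10^{p-2}-1)}{b+1-10^{p-1}}\\ &+\sum_{j=10^{p-2}-1}^{l-1}\ \sum_{a=\max(10^{p+k},(10j+(d+1))10^{k+1})}^{(10(j+1)+d)10^{k+1}-1}\frac{10^{k+1}(j+1)-10^{p-2}}{a+1-10^{p-1}}, \end{align*} and if the $p$-th digit of $n$ is different from $d$, \begin{align*} r_{(n,d,p)}=&\sum_{j=10^{p-2}}^{l}\ \sum_{b=(10j+d)10^{k+1}}^{(10j+(d+1))10^{k+1}-1}\frac{b-((9j+d)10^{k+1}+10^{p-2}-1)}{b+1-10^{p-1}}\\ &+\sum_{j=10^{p-2}-1}^{l}\ \sum_{a=\max(10^{p+k},(10j+(d+1))10^{k+1})}^{\min(n,(10(j+1)+d)10^{k+1}-1)}\frac{10^{k+1}(j+1)-10^{p-2}}{a+1-10^{p-1}}.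 \end{align*}
   Context: For an integer $x\ge 10^{p-1}$, the ''$p$-th digit of $x$'' is the $p$-th digit of its decimal expansion counted from the left. For $d\in\{0,\dots,9\}$ and $m\ge 10^{p-1}$, let $N_d(m)$ be the number of integers $x$ with $10^{p-1}\le x\le m$ whose $p$-th digit is $d$. For $N\ge 10^{p-1}$, $$P_{(d,N,p)}=\frac{1}{N+1-10^{p-1}}\sum_{m=10^{p-1}}^{N}\frac{N_d(m)}{m+1-10^{p-1}},$$ the probability that the $p$-th digit of $x$ is $d$ when $m$ is chosen uniformly in $\{10^{p-1},\dots,N\}$ and then $x$ uniformly in $\{10^{p-1},\dots,m\}$. Empty sums are zero. *)

From HB Require Import structures.
From mathcomp Require Import all_boot all_order all_algebra.
Set Implicit Arguments. Unset Strict Implicit. Unset Printing Implicit Defensive.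
Import Order.TTheory GRing.Theory Num.Theory.

(* Number of decimal digits of x > 0 : trunc_log 10 x is the largest e with 10^e <= x. *)
Definition ndigits (x : nat) : nat := (trunc_log 10 x).+1.

(* p-th decimal digit of x counted from the left (meaningful for x >= 10^(p-1)). *)
Definition pdigit (p x : nat) : nat := (x %/ 10 ^ (ndigits x - p)) %% 10.

Definition Ncount (d p m : nat) : nat :=
  \sum_(10 ^ (p - 1) <= x < m.+1 | pdigit p x == d) 1.

Local Open Scope ring_scope.

(* P_(d,N,p) as a rational number (meaningful for N >= 10^(p-1)). *)
Definition Prob (d N p : nat) : rat :=
  ((N.+1 - 10 ^ (p - 1))%N%:R)^-1 *
  \sum_(10 ^ (p - 1) <= m < N.+1)
     ((Ncount d p m)%:R / ((m.+1 - 10 ^ (p - 1))%N%:R)).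

Definition sumz (a b : int) (F : int -> rat) : rat :=
  if a <= b then \sum_(t < absz (b - a + 1)) F (a + t%:Z) else 0.

(* 10^e as an integer, for an integer exponent e >= 0 (only used with e >= 0). *)
Definition tp (e : int) : int := 10 ^+ absz e.

(* l = floor((n - (10^(p-1)+d) 10^(k+1)) / 10^(k+2)) + 10^(p-2);
   intdiv's %/ by a positive divisor is the floor. *)
Definition lval (n d p : nat) (k : int) : int :=
  ((n%:Z - ((10 ^ (p - 1))%N%:Z + d%:Z) * tp (k + 1)) %/ tp (k + 2))%Z
  + (10 ^ (p - 2))%N%:Z.

Definition rterm (n d p : nat) (k : int) : rat :=
  let l := lval n d p k in
  let q1 := (10 ^ (p - 1))%N%:Z in
  let q2 := (10 ^ (p - 2))%N%:Z in
  let K1 := tp (k + 1) in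
  let Fb j b : rat := (b - ((9 * j + d%:Z) * K1 + q2 - 1))%:~R / (b + 1 - q1)%:~R in
  let Fa j a : rat := (K1 * (j + 1) - q2)%:~R / (a + 1 - q1)%:~R in
  if pdigit p n == d then
    sumz q2 l (fun j =>
      sumz ((10 * j + d%:Z) * K1)
           (Order.min n%:Z ((10 * j + (d%:Z + 1)) * K1 - 1)) (Fb j))
    + sumz (q2 - 1) (l - 1) (fun j =>
      sumz (Order.max (tp (p%:Z + k)) ((10 * j + (d%:Z + 1)) * K1))
           ((10 * (j + 1) + d%:Z) * K1 - 1) (Fa j))
  else
    sumz q2 l (fun j =>
      sumz ((10 * j + d%:Z) * K1) ((10 * j + (d%:Z + 1)) * K1 - 1) (Fb j))
    + sumz (q2 - 1) l (fun j =>
      sumz (Order.max (tp (p%:Z + k)) ((10 * j + (d%:Z + 1)) * K1))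
           (Order.min n%:Z ((10 * (j + 1) + d%:Z) * K1 - 1)) (Fa j)).

From HB Require Import structures.
From mathcomp Require Import all_boot all_order all_algebra.
Import Order.TTheory GRing.Theory Num.Theory.
From mathcomp Require Import zify.
Set Implicit Arguments. Unset Strict Implicit. Unset Printing Implicit Defensive.

(* Write i = k + 1 and K = 10^i, so that every x in [10^(p+k), n] has p + i digits
   and its p-th digit is (x / K) mod 10.  Counting the numbers below 10^(p+k)
   separately gives N_d(m) + 10^(p-2) = #{x <= m | (x / K) mod 10 = d} for those m;
   this count grows by one at each step of a run [(10j+d)K, (10j+d+1)K) of numbers
   with p-th digit d and stays equal to K(j+1) on the gap that follows, which is
   exactly what the summands of r_(n,d,p) say.  Splitting the sum defining
   P_(d,n,p) at 10^(p+k), the lower part is P_(d,10^(p+k)-1,p)(10^(p+k)-10^(p-1))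
   by definition, and the upper part is the sum over runs and gaps, which tile
   [10^(p+k), n] in order, so that the double sums of r telescope to it. *)

Definition digit_count (K d m : nat) : nat :=
  \sum_(0 <= x < m | (x %/ K) %% 10 == d) 1.

Lemma digit_countS K d m :
  digit_count K d m.+1 = digit_count K d m + ((m %/ K) %% 10 == d).
Proof. by rewrite /digit_count big_mkcond big_nat_recr //= -big_mkcond; case: eqP. Qed.

Lemma digit_blockE K d a s : 0 < K -> s < 10 * K ->
  (((10 * K * a + s) %/ K) %% 10 == d) = (d * K <= s < d * K + K).
Proof.
move=> K0 sK.
have -> : 10 * K * a + s = (10 * a) * K + s by lia.
rewrite divnMDl // -modnDml mulnC modnMl add0n modn_small ?ltn_divLR //.
apply/eqP/andP => [<-|[h1 h2]].
  by rewrite leq_divM -mulSnr ltn_ceil.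
by apply/eqP; rewrite eqn_leq -ltnS ltn_divLR // mulSnr h2 leq_divRL.
Qed.

Lemma digit_count_block K d a s : 0 < K -> d <= 9 -> s <= 10 * K ->
  digit_count K d (10 * K * a + s) = K * a + minn K (s - d * K).
Proof.
move=> K0 d9.
have dK : d * K <= 9 * K by rewrite leq_mul2r d9 orbT.
elim: a s => [|a IH] s.
  elim: s => [|s IHs] hs; first by rewrite muln0 /digit_count big_geq //; lia.
  rewrite addnS digit_countS IHs ?(ltnW hs) // digit_blockE // !muln0 !add0n.
  by case: leqP => h1; case: ltnP => h2 /=; lia.
move=> hs; have -> : 10 * K * a.+1 + s = 10 * K * a + (10 * K + s) by lia.
elim: s hs => [|s IHs] hs; first by rewrite addn0 IH; lia.
rewrite !addnS digit_countS IHs ?(ltnW hs) //.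
have -> : 10 * K * a + (10 * K + s) = 10 * K * a.+1 + s by lia.
by rewrite digit_blockE //; case: leqP => h1; case: ltnP => h2 /=; lia.
Qed.

Lemma digit_count_mul K d a : 0 < K -> d <= 9 -> digit_count K d (10 * K * a) = K * a.
Proof.
by move=> K0 d9; rewrite -[10 * K * a]addn0 digit_count_block // sub0n minn0 addn0.
Qed.

Lemma pdigitE p i x : 0 < p -> 10 ^ (p - 1 + i) <= x < 10 ^ (p + i) ->
  pdigit p x = (x %/ 10 ^ i) %% 10.
Proof.
move=> p0 hx; rewrite /pdigit /ndigits (@trunc_log_eq _ (p - 1 + i)) //.
  by congr (_ %/ 10 ^ _ %% _); lia.
by rewrite (_ : (p - 1 + i).+1 = p + i) //; lia.
Qed.

Lemma NcountS d p m : 10 ^ (p - 1) <= m.+1 ->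
  Ncount d p m.+1 = Ncount d p m + (pdigit p m.+1 == d).
Proof. by move=> hm; rewrite /Ncount big_mkcond big_nat_recr //= -big_mkcond; case: eqP. Qed.

Lemma pow10_split p i : 0 < p -> 10 ^ (p + i) = 10 * 10 ^ i * 10 ^ (p - 1).
Proof. by move=> p0; rewrite (_ : p + i = (i + (p - 1)).+1) ?expnS ?expnD ?mulnA //; lia. Qed.

Section NcountRange.
Variables (d p i : nat).
Hypotheses (p2 : 2 <= p) (d9 : d <= 9).

Lemma Ncount_digit_count_from :
  Ncount d p (10 ^ (p - 1 + i)).-1 + 10 ^ (p - 2) = digit_count (10 ^ i) d (10 ^ (p - 1 + i)) ->
  forall m, 10 ^ (p - 1 + i) <= m.+1 <= 10 ^ (p + i) ->
  Ncount d p m + 10 ^ (p - 2) = digit_count (10 ^ i) d m.+1.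
Proof.
move=> base; elim=> [|m IHm] /andP[lo hi].
  by move: lo; rewrite leqNgt (@leq_trans 10) // -[10]expn1 leq_pexp2l //; lia.
have [eq_lo|ne_lo] := eqVneq (10 ^ (p - 1 + i)) m.+2.
  by rewrite -[m.+1]/(m.+2).-1 -eq_lo.
have lo' : 10 ^ (p - 1 + i) <= m.+1 by rewrite -ltnS ltn_neqAle ne_lo lo.
rewrite NcountS; last by apply: leq_trans lo'; rewrite leq_pexp2l ?leq_addr.
rewrite [RHS]digit_countS -IHm ?lo' ?(ltnW hi) // (pdigitE (i := i)) ?lo' //.
  by rewrite addnAC.
by rewrite (leq_trans _ p2).
Qed.
End NcountRange.

Lemma Ncount_digit_count d p i m : 2 <= p -> d <= 9 ->
  10 ^ (p - 1 + i) <= m.+1 <= 10 ^ (p + i) ->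
  Ncount d p m + 10 ^ (p - 2) = digit_count (10 ^ i) d m.+1.
Proof.
move=> p2 d9; elim: i m => [|i IHi]; apply: Ncount_digit_count_from => //.
  rewrite addn0 /Ncount prednK ?expn_gt0 // big_geq // add0n.
  rewrite (_ : 10 ^ (p - 1) = 10 * 10 ^ 0 * 10 ^ (p - 2)) ?digit_count_mul ?expn0 ?mul1n //.
  by rewrite (_ : p - 1 = (p - 2).+1) 1?expnS; lia.
have -> : p - 1 + i.+1 = p + i by lia.
have pos : 0 < 10 ^ (p + i) by rewrite expn_gt0.
rewrite IHi ?prednK // ?leqnn ?leq_pexp2l ?andbT //; last lia.
rewrite {1}(@pow10_split p i) ?digit_count_mul ?expn_gt0 //; last lia.
rewrite (_ : 10 ^ (p + i) = 10 * 10 ^ i.+1 * 10 ^ (p - 2)) ?digit_count_mul ?expn_gt0 //.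
  by rewrite -!expnD; congr (_ ^ _); lia.
by rewrite -expnS -expnD; congr (_ ^ _); lia.
Qed.

Lemma digit_count_run K d j m : 0 < K -> d <= 9 ->
  (10 * j + d) * K <= m < (10 * j + d + 1) * K ->
  digit_count K d m.+1 = m.+1 - (9 * j + d) * K.
Proof.
move=> K0 d9 /andP[lo hi].
have dK : d * K <= 9 * K by rewrite leq_mul2r d9 orbT.
by rewrite (_ : m.+1 = 10 * K * j + (m.+1 - 10 * K * j)) ?digit_count_block //; lia.
Qed.

Lemma digit_count_gap K d j m : 0 < K -> d <= 9 ->
  (10 * j + d + 1) * K <= m < (10 * j + 10 + d) * K ->
  digit_count K d m.+1 = K * j.+1.
Proof.
move=> K0 d9 /andP[lo hi].
have dK : d * K <= 9 * K by rewrite leq_mul2r d9 orbT.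
have [m_lt|m_ge] := leqP m.+1 (10 * K * j.+1).
  by rewrite (_ : m.+1 = 10 * K * j + (m.+1 - 10 * K * j)) ?digit_count_block //; lia.
by rewrite (_ : m.+1 = 10 * K * j.+1 + (m.+1 - 10 * K * j.+1)) ?digit_count_block //; lia.
Qed.

Lemma digit_run_gapE K d a m : 0 < K -> d <= 9 ->
  (10 * a + d) * K <= m < (10 * a + 10 + d) * K ->
  ((m %/ K) %% 10 == d) = (m < (10 * a + d + 1) * K).
Proof.
move=> K0 d9 /andP[lo hi].
have dK : d * K <= 9 * K by rewrite leq_mul2r d9 orbT.
have [m_lt|m_ge] := ltnP m (10 * K * a.+1).
  have -> : m = 10 * K * a + (m - 10 * K * a) by lia.
  by rewrite digit_blockE //; [apply/idP/idP | ]; lia.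
have -> : m = 10 * K * a.+1 + (m - 10 * K * a.+1) by lia.
by rewrite digit_blockE //; [apply/idP/idP | ]; lia.
Qed.

Section NcountOnRuns.
Variables (d p i m : nat).
Hypotheses (p2 : 2 <= p) (d9 : d <= 9) (m_digits : 10 ^ (p - 1 + i) <= m < 10 ^ (p + i)).

Let Ncount_m : Ncount d p m + 10 ^ (p - 2) = digit_count (10 ^ i) d m.+1.
Proof.
by apply: Ncount_digit_count => //; case/andP: m_digits => lo ->; rewrite leqW.
Qed.

Lemma Ncount_run j : (10 * j + d) * 10 ^ i <= m < (10 * j + d + 1) * 10 ^ i ->
  Ncount d p m + 10 ^ (p - 2) + (9 * j + d) * 10 ^ i = m.+1.
Proof.
move=> hm; rewrite Ncount_m (digit_count_run _ _ hm) ?expn_gt0 // subnK //.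
by case/andP: hm; lia.
Qed.

Lemma Ncount_gap j : (10 * j + d + 1) * 10 ^ i <= m < (10 * j + 10 + d) * 10 ^ i ->
  Ncount d p m + 10 ^ (p - 2) = 10 ^ i * j.+1.
Proof. by move=> hm; rewrite Ncount_m (digit_count_gap _ _ hm) ?expn_gt0. Qed.

End NcountOnRuns.

Local Open Scope ring_scope.

Section IntegerSums.
Variable F : int -> rat.

Definition psum (c x : int) : rat := \sum_(t < absz (x - c)) F (c + t%:Z).

Lemma psum_id (c : int) : psum c c = 0.
Proof. by rewrite /psum subrr big_ord0. Qed.

Lemma sumz_empty (a b : int) : b < a -> sumz a b F = 0.
Proof. by move=> ba; rewrite /sumz ifF //; lia. Qed.

Lemma sumz_psum (c a b : int) : c <= a -> a <= b + 1 ->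
  sumz a b F = psum c (b + 1) - psum c a.
Proof.
move=> ca ab; rewrite /sumz /psum.
have -> : absz (b + 1 - c)%R = (absz (a - c)%R + absz (b - a + 1)%R)%N by lia.
rewrite big_split_ord /=; case: ifP => hab.
  rewrite [RHS]addrC addKr; apply: eq_bigr => t _; congr F; lia.
by rewrite (_ : absz (b - a + 1)%R = 0%N) ?big_ord0 ?addr0 ?subrr //; lia.
Qed.

Lemma sumz_clamp (lo hi a b : int) : lo <= hi + 1 -> a <= b + 1 ->
  sumz (Order.max lo a) (Order.min hi b) F =
  psum lo (Order.min (hi + 1) (Order.max lo (b + 1)))
  - psum lo (Order.min (hi + 1) (Order.max lo a)).
Proof.
move=> lohi ab.
have [nonempty|empty] := lerP (Order.max lo a) (Order.min hi b + 1).
  rewrite (@sumz_psum lo); try lia.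
  have -> : Order.min (hi + 1) (Order.max lo (b + 1)) = Order.min hi b + 1 by lia.
  by have -> : Order.min (hi + 1) (Order.max lo a) = Order.max lo a by lia.
have -> : Order.min (hi + 1) (Order.max lo (b + 1)) = Order.min (hi + 1) (Order.max lo a) by lia.
by rewrite subrr; apply: sumz_empty; lia.
Qed.

Lemma eq_sumz (G : int -> rat) (a b : int) :
  (forall x, a <= x <= b -> F x = G x) -> sumz a b F = sumz a b G.
Proof.
move=> FG; rewrite /sumz; case: ifP => // ab.
by apply: eq_bigr => t _; apply: FG; have := ltn_ord t; lia.
Qed.

Lemma sumzD (G : int -> rat) (a b : int) :
  sumz a b (fun j => F j + G j) = sumz a b F + sumz a b G.
Proof. by rewrite /sumz; case: ifP => _; rewrite ?big_split ?addr0. Qed.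

Lemma sumz_shift (a b : int) : sumz a b F = sumz (a + 1) (b + 1) (fun j => F (j - 1)).
Proof.
rewrite /sumz (_ : (a + 1 <= b + 1) = (a <= b)); last by lia.
case: ifP => // _; rewrite (_ : absz (b + 1 - (a + 1) + 1)%R = absz (b - a + 1)%R); last lia.
by apply: eq_bigr => t _; congr F; lia.
Qed.

Lemma sumz_recr (a b : int) : a <= b -> sumz a b F = sumz a (b - 1) F + F b.
Proof.
move=> ab; rewrite /sumz ifT //; case: ifP => hab.
  rewrite (_ : absz (b - a + 1)%R = (absz (b - 1 - a + 1)%R).+1); last by lia.
  by rewrite big_ord_recr /=; congr (_ + F _); lia.
rewrite (_ : absz (b - a + 1)%R = 1%N); last by lia.
by rewrite big_ord1 add0r; congr F; rewrite addr0; lia.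
Qed.

End IntegerSums.

Lemma sumz_telescope (g : int -> rat) (a b : int) : a <= b + 1 ->
  sumz a b (fun j => g j - g (j - 1)) = g b - g (a - 1).
Proof.
move=> ab; rewrite /sumz; case: ifP => hab; last first.
  by rewrite (_ : b = a - 1) ?subrr //; lia.
rewrite (eq_bigr (fun t : 'I__ => g (a - 1 + t.+1%:Z) - g (a - 1 + t%:Z))); last first.
  by move=> t _; congr (g _ - g _); lia.
rewrite -(big_mkord xpredT (fun t => g (a - 1 + t.+1%:Z) - g (a - 1 + t%:Z))).
by rewrite telescope_sumr // addr0; congr (g _ - _); lia.
Qed.

Lemma sumz_interleave (g : int -> rat) (x y : int -> int) (a b : int) : a <= b + 1 ->
  sumz a b (fun j => g (y j) - g (x j))
  + sumz (a - 1) (b - 1) (fun j => g (x (j + 1)) - g (y j))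
  = g (y b) - g (y (a - 1)).
Proof.
move=> ab; rewrite (sumz_shift _ (a - 1)) !subrK -sumzD -(sumz_telescope (g \o y)) //.
by apply: eq_sumz => j _; rewrite subrK addrA subrK.
Qed.

Definition Psummand (d p : nat) (x : int) : rat :=
  (Ncount d p (absz x))%:R / ((absz x).+1 - 10 ^ (p - 1))%N%:R.

Lemma tpE (m : nat) : tp m%:Z = (10 ^ m)%N%:Z.
Proof. by rewrite /tp absz_nat -natz natrX. Qed.

(* K and Q stand for 10^i and 10^(p-2); as section variables they (and their
   products) are atoms for lia. *)
Section Remainder.
Variables (p d n i K Q : nat).
Hypotheses (p2 : (2 <= p)%N) (d9 : (d <= 9)%N)
  (K_def : K = (10 ^ i)%N) (Q_def : Q = (10 ^ (p - 2))%N)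
  (n_lo : (10 ^ (p - 1 + i) <= n)%N) (n_hi : (n < 10 ^ (p + i))%N).

Local Notation M := (10 * Q * K)%N.

Let K_gt0 : (0 < K)%N. Proof. by rewrite K_def expn_gt0. Qed.

Let QK_ge : (Q <= Q * K)%N. Proof. by rewrite leq_pmulr. Qed.

Let q_split : (10 ^ (p - 1) = 10 * Q)%N.
Proof. by rewrite Q_def (_ : p - 1 = (p - 2).+1)%N 1?expnS; lia. Qed.

Let M_split : (10 ^ (p - 1 + i) = 10 * Q * K)%N.
Proof. by rewrite expnD q_split K_def. Qed.

Let dK_le : (d * K <= 9 * K)%N. Proof. by rewrite leq_mul2r d9 orbT. Qed.

Lemma run_summandE (j x : int) : 0 <= j -> M%:Z <= x <= n%:Z ->
  (10 * j + d%:Z) * K%:Z <= x <= (10 * j + (d%:Z + 1)) * K%:Z - 1 ->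
  (x - ((9 * j + d%:Z) * K%:Z + Q%:Z - 1))%:~R / (x + 1 - (10 * Q)%N%:Z)%:~R
  = Psummand d p x.
Proof.
move=> j0 /andP[x_ge x_le] /andP[b_ge b_le].
have [jn ej] : exists jn : nat, j = jn%:Z by exists (absz j); lia.
have [xn ex] : exists xn : nat, x = xn%:Z by exists (absz x); lia.
subst j x.
have xn_digits : (10 ^ (p - 1 + i) <= xn < 10 ^ (p + i))%N.
  by rewrite M_split; apply/andP; split; lia.
have xn_in_run : ((10 * jn + d) * 10 ^ i <= xn < (10 * jn + d + 1) * 10 ^ i)%N.
  by rewrite -K_def; apply/andP; split; lia.
have := Ncount_run p2 d9 xn_digits xn_in_run; rewrite -K_def -Q_def => count.
rewrite /Psummand absz_nat q_split (_ : _ - _ = (Ncount d p xn)%:Z); last by lia.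
by rewrite (_ : _ - _ = (xn.+1 - 10 * Q)%N%:Z) //; lia.
Qed.

Lemma gap_summandE (j x : int) : 0 <= j -> M%:Z <= x <= n%:Z ->
  (10 * j + (d%:Z + 1)) * K%:Z <= x <= (10 * (j + 1) + d%:Z) * K%:Z - 1 ->
  (K%:Z * (j + 1) - Q%:Z)%:~R / (x + 1 - (10 * Q)%N%:Z)%:~R = Psummand d p x.
Proof.
move=> j0 /andP[x_ge x_le] /andP[b_ge b_le].
have [jn ej] : exists jn : nat, j = jn%:Z by exists (absz j); lia.
have [xn ex] : exists xn : nat, x = xn%:Z by exists (absz x); lia.
subst j x.
have xn_digits : (10 ^ (p - 1 + i) <= xn < 10 ^ (p + i))%N.
  by rewrite M_split; apply/andP; split; lia.
have xn_in_run : ((10 * jn + d + 1) * 10 ^ i <= xn < (10 * jn + 10 + d) * 10 ^ i)%N.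
  by rewrite -K_def; apply/andP; split; lia.
have := Ncount_gap p2 d9 xn_digits xn_in_run; rewrite -K_def -Q_def => count.
rewrite /Psummand absz_nat q_split (_ : _ - _ = (Ncount d p xn)%:Z); last by lia.
by rewrite (_ : _ - _ = (xn.+1 - 10 * Q)%N%:Z) //; lia.
Qed.

Lemma floor_index_bounds (l : int) :
  l = ((n%:Z - ((10 * Q)%N%:Z + d%:Z) * K%:Z) %/ (10 * K)%N%:Z)%Z + Q%:Z ->
  [/\ (10 * l + d%:Z) * K%:Z <= n%:Z, n%:Z < (10 * l + d%:Z + 10) * K%:Z & Q%:Z - 1 <= l].
Proof.
move=> ->; set x := (n%:Z - _).
have D_gt0 : 0 < (10 * K)%N%:Z by rewrite ltz_nat muln_gt0.
have x_ge := lez_floor x (lt0r_neq0 D_gt0); have x_lt := ltz_ceil x D_gt0.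
have : -1 <= (x %/ (10 * K)%N%:Z)%Z by rewrite lez_divRL // /x; lia.
by move: x_ge x_lt; rewrite /x; move: (_ %/ _)%Z => t; split; lia.
Qed.

Lemma pdigit_at_index (l : int) :
  (10 * l + d%:Z) * K%:Z <= n%:Z -> n%:Z < (10 * l + d%:Z + 10) * K%:Z -> Q%:Z - 1 <= l ->
  (pdigit p n == d) = (n%:Z < (10 * l + (d%:Z + 1)) * K%:Z).
Proof.
move=> lo hi lQ; have [ln el] : exists ln : nat, l = ln%:Z by exists (absz l); lia.
subst l; rewrite (@pdigitE p i); last by rewrite M_split; apply/andP; split; lia.
  rewrite -K_def (@digit_run_gapE _ _ ln) //; last by apply/andP; split; lia.
  by apply/idP/idP; lia.
by rewrite (leq_trans _ p2).
Qed.

(* The sum of the summands of P over [M, x), with x clamped to [M, n + 1]; the inner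
   sums of r are its increments over runs and gaps. *)
Let cumsum (x : int) : rat :=
  psum (Psummand d p) M%:Z (Order.min (n%:Z + 1) (Order.max M%:Z x)).

Let mulK (a j : int) : a <= j -> a * K%:Z <= j * K%:Z.
Proof. by move=> aj; rewrite ler_wpM2r. Qed.

Lemma sumz_cumsum (a b lo hi : int) (F : int -> rat) :
  a = Order.max M%:Z lo -> b = Order.min n%:Z (hi - 1) -> lo <= hi ->
  (forall x, a <= x <= b -> F x = Psummand d p x) -> sumz a b F = cumsum hi - cumsum lo.
Proof. by move=> -> -> lohi FE; rewrite (eq_sumz FE) sumz_clamp ?subrK //; lia. Qed.

Lemma sumz_run (j b : int) : Q%:Z <= j ->
  b = Order.min n%:Z ((10 * j + (d%:Z + 1)) * K%:Z - 1) ->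
  sumz ((10 * j + d%:Z) * K%:Z) b (fun x =>
    (x - ((9 * j + d%:Z) * K%:Z + Q%:Z - 1))%:~R / (x + 1 - (10 * Q)%N%:Z)%:~R)
  = cumsum ((10 * j + (d%:Z + 1)) * K%:Z) - cumsum ((10 * j + d%:Z) * K%:Z).
Proof.
move=> jQ eb; have := mulK jQ => jK.
apply: sumz_cumsum => //; try lia.
by move=> x /andP[x_ge x_le]; apply: run_summandE; lia.
Qed.

Lemma sumz_gap (j b : int) : Q%:Z - 1 <= j ->
  b = Order.min n%:Z ((10 * (j + 1) + d%:Z) * K%:Z - 1) ->
  sumz (Order.max M%:Z ((10 * j + (d%:Z + 1)) * K%:Z)) b (fun x =>
    (K%:Z * (j + 1) - Q%:Z)%:~R / (x + 1 - (10 * Q)%N%:Z)%:~R)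
  = cumsum ((10 * (j + 1) + d%:Z) * K%:Z) - cumsum ((10 * j + (d%:Z + 1)) * K%:Z).
Proof.
move=> jQ eb; have := mulK jQ => jK.
apply: sumz_cumsum => //; try lia.
by move=> x /andP[x_ge x_le]; apply: gap_summandE; lia.
Qed.

Lemma cumsum_first_run : cumsum ((10 * (Q%:Z - 1) + (d%:Z + 1)) * K%:Z) = 0.
Proof. by rewrite /cumsum (_ : Order.min _ _ = M%:Z) ?psum_id //; lia. Qed.

Lemma cumsum_beyond (x : int) : n%:Z < x -> cumsum x = sumz M%:Z n%:Z (Psummand d p).
Proof.
move=> nx; rewrite (sumz_psum _ (lexx M%:Z)) ?psum_id ?subr0; last by lia.
by rewrite /cumsum (_ : Order.min _ _ = n%:Z + 1) //; lia.
Qed.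

Lemma rterm_remainder :
  rterm n d p (i%:Z - 1) = sumz (10 ^ (p - 1 + i))%N%:Z n%:Z (Psummand d p).
Proof.
rewrite /rterm /lval; cbv beta zeta.
have -> : i%:Z - 1 + 2 = i.+1%:Z by lia.
have -> : p%:Z + (i%:Z - 1) = (p - 1 + i)%N%:Z by lia.
rewrite subrK !tpE !M_split q_split expnS -K_def -Q_def; set l := (_ + Q%:Z).
have [l_lo l_hi lQ] := floor_index_bounds (erefl l).
rewrite (pdigit_at_index l_lo l_hi lQ); clearbody l; have lK := mulK lQ.
case: ifP => [n_in_run | n_after_run].
  rewrite (eq_sumz (fun j jQl => sumz_run (proj1 (andP jQl)) (erefl _))).
  rewrite [sumz (Q%:Z - 1) _ _](eq_sumz (G := fun j =>
    cumsum ((10 * (j + 1) + d%:Z) * K%:Z) - cumsum ((10 * j + (d%:Z + 1)) * K%:Z))); last first.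
    by move=> j /andP[jQ jl]; apply: sumz_gap; [lia | have := mulK jl; lia].
  by rewrite sumz_interleave ?cumsum_first_run ?subr0 ?cumsum_beyond //; lia.
rewrite (eq_sumz (G := fun j =>
  cumsum ((10 * j + (d%:Z + 1)) * K%:Z) - cumsum ((10 * j + d%:Z) * K%:Z))); last first.
  by move=> j /andP[jQ jl]; apply: sumz_run; [lia | have := mulK jl; lia].
rewrite (eq_sumz (fun j jQl => sumz_gap (proj1 (andP jQl)) (erefl _))) [sumz (Q%:Z - 1) _ _]sumz_recr //.
rewrite addrA sumz_interleave; last by lia.
by rewrite cumsum_first_run subr0 addrC subrK cumsum_beyond //; lia.
Qed.
End Remainder.

Lemma ProbE d N p : Prob d N p =
  ((N.+1 - 10 ^ (p - 1))%N%:R)^-1 * \sum_(10 ^ (p - 1) <= m < N.+1) Psummand d p m%:Z.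
Proof. by congr (_ * _); apply: eq_bigr => m _; rewrite /Psummand absz_nat. Qed.

Lemma Prob_scaled d N p : (10 ^ (p - 1) <= N)%N ->
  Prob d N p * (N.+1 - 10 ^ (p - 1))%N%:R = \sum_(10 ^ (p - 1) <= m < N.+1) Psummand d p m%:Z.
Proof. by move=> hN; rewrite ProbE mulrAC mulVf ?mul1r // pnatr_eq0 subn_eq0 -ltnNge ltnS. Qed.

Lemma Prob_pow_scaled d p i : (0 < i)%N ->
  Prob d (10 ^ (p - 1 + i) - 1) p * (10 ^ (p - 1 + i) - 10 ^ (p - 1))%N%:R
  = \sum_(10 ^ (p - 1) <= m < 10 ^ (p - 1 + i)) Psummand d p m%:Z.
Proof.
move=> i_gt0; have M_succ : ((10 ^ (p - 1 + i) - 1).+1 = 10 ^ (p - 1 + i))%N.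
  by rewrite subn1 prednK ?expn_gt0.
have q_lt_M : (10 ^ (p - 1) < 10 ^ (p - 1 + i))%N by rewrite ltn_exp2l //; lia.
by rewrite -{2 3}M_succ Prob_scaled // -ltnS M_succ.
Qed.

Lemma big_nat_sumz (a b : nat) (F : int -> rat) : (a <= b.+1)%N ->
  \sum_(a <= m < b.+1) F m%:Z = sumz a%:Z b%:Z F.
Proof.
move=> ab; rewrite /sumz; case: ifP => [le_ab | gt_ab]; last by rewrite big_geq //; lia.
rewrite -{1}(add0n a) big_addn big_mkord (_ : (b.+1 - a)%N = absz (b%:Z - a%:Z + 1)); last by lia.
by apply: eq_bigr => t _; congr F; lia.
Qed.

Lemma exponent_of_length p n k : (0 < p)%N -> (10 ^ (p - 1) <= n)%N ->
  (k = -1 /\ forall i : nat, ~ (10 ^ (i + p) <= n)%N) \/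
  (exists i : nat, [/\ k = i%:Z, (10 ^ (i + p) <= n)%N &
                      forall i' : nat, (10 ^ (i' + p) <= n)%N -> (i' <= i)%N]) ->
  exists i : nat, [/\ k = i%:Z - 1, (10 ^ (p - 1 + i) <= n)%N & (n < 10 ^ (p + i))%N].
Proof.
move=> p0 hn [[-> none] | [i [-> hi max_i]]].
  by exists 0%N; rewrite !addn0 hn ltnNge; split => //; apply/negP; apply: none 0%N.
exists i.+1; split; first by lia.
  by rewrite (_ : (p - 1 + i.+1 = i + p)%N) //; lia.
rewrite ltnNge; apply/negP => big.
by have := max_i i.+1; rewrite addnC big ltnn => /(_ isT).
Qed.

Theorem proposition4 (p d n : nat) (k : int)
  (hp : (2 <= p)%N) (hd : (d <= 9)%N) (hn : (10 ^ (p - 1) <= n)%N)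
  (hk : (k = -1 /\ forall i : nat, ~ (10 ^ (i + p) <= n)%N) \/
        (exists i : nat, [/\ k = i%:Z, (10 ^ (i + p) <= n)%N &
                            forall i' : nat, (10 ^ (i' + p) <= n)%N -> (i' <= i)%N])) :
  Prob d n p =
  ((n.+1 - 10 ^ (p - 1))%N%:R)^-1 *
  ((if k == -1 then 0
    else Prob d (10 ^ (absz (k + p%:Z))%R - 1)%N p
         * (tp (k + p%:Z) - (10 ^ (p - 1))%N%:Z)%:~R)
   + rterm n d p k).
Proof.
have [i [-> n_lo n_hi]] := exponent_of_length (ltnW hp) hn hk.
have q_le_M : (10 ^ (p - 1) <= 10 ^ (p - 1 + i))%N by rewrite leq_pexp2l ?leq_addr.
rewrite ProbE (@big_cat_nat _ _ _ (10 ^ (p - 1 + i))) //=; last exact: leqW.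
rewrite big_nat_sumz; last exact: leqW.
rewrite -(rterm_remainder hp hd erefl erefl n_lo n_hi).
have -> : (i%:Z - 1 == -1) = (i == 0%N) by apply/eqP/eqP; lia.
congr (_ * (_ + _)); case: (posnP i) => [-> | i_gt0] /=.
  by rewrite big_geq // addn0.
rewrite (_ : i%:Z - 1 + p%:Z = (p - 1 + i)%N%:Z) ?tpE ?absz_nat; last by lia.
by rewrite (_ : _ - _ = (10 ^ (p - 1 + i) - 10 ^ (p - 1))%N%:Z) ?Prob_pow_scaled //; lia.
Qed.
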